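(* Let $\mathcal{V}$ be a non-trivial quantale, $\widehat{\mathsf{F}}$ a lax extension of a functor $\mathsf{F}\colon\mathbf{Set}\to\mathbf{Set}$ to $\mathbf{Rel}(\mathcal{V})$, and $\alpha\colon X\to\mathsf{F}X$ an $\mathsf{F}$-coalgebra. Every symmetric $\widehat{\mathsf{F}}$-simulation $s$ on $\alpha$ satisfies $\alpha\cdot s\le\widehat{\mathsf{F}}^s s\cdot\alpha$, i.e. is an $\widehat{\mathsf{F}}^s$-simulation, where $\widehat{\mathsf{F}}^s s=\widehat{\mathsf{F}}s\wedge(\widehat{\mathsf{F}}s)^\circ$.
   Context: A quantale $(\mathcal{V},\otimes,k)$ is a complete lattice with commutative monoid structure, each $u\otimes-$ preserving joins, $\hom(u,-)$ its right adjoint; non-trivial: $\bot\ne\top$. $\mathcal{V}$-relations $r\colon X\nrightarrow Y$ are maps $X\times Y\to\mathcal{V}$, composed by $(s\cdot r)(x,z)=\bigvee_y r(x,y)\otimes s(y,z)$, converse $r^\circ(y,x)=r(x,y)$, ordered pointwise, meets pointwise; a function (e.g. $\alpha$) is viewed as the relation with value $k$ on its graph and $\bot$ elsewhere. A lax extension of $\mathsf{F}$ assigns to each $r\colon X\nrightarrow Y$ a $\widehat{\mathsf{F}}r\colon\mathsf{F}X\nrightarrow\mathsf{F}Y$ with (L1) $r\le r'\Rightarrow\widehat{\mathsf{F}}r\le\widehat{\mathsf{F}}r'$, (L2) $\widehat{\mathsf{F}}s\cdot\widehat{\mathsf{F}}r\le\widehat{\mathsf{F}}(s\cdot r)$, (L3)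 $\mathsf{F}f\le\widehat{\mathsf{F}}f$, $(\mathsf{F}f)^\circ\le\widehat{\mathsf{F}}(f^\circ)$. A $\mathcal{V}$-relation $s\colon X\nrightarrow X$ is symmetric if $s=s^\circ$, and is an $\widehat{\mathsf{F}}$-simulation on $\alpha$ if $\alpha\cdot s\le\widehat{\mathsf{F}}s\cdot\alpha$. *)

Record quantale := Quantale {
  qcar :> Type;
  qle : qcar -> qcar -> Prop;
  qle_refl : forall a, qle a a;
  qle_trans : forall a b c, qle a b -> qle b c -> qle a c;
  qle_antisym : forall a b, qle a b -> qle b a -> a = b;
  qsup : forall I : Type, (I -> qcar) -> qcar;
  qsup_ub : forall (I : Type) (f : I -> qcar) (i : I), qle (f i) (qsup I f);
  qsup_least : forall (I : Type) (f : I -> qcar) (b : qcar),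
      (forall i, qle (f i) b) -> qle (qsup I f) b;
  qten : qcar -> qcar -> qcar;
  qk : qcar;
  qten_assoc : forall a b c, qten a (qten b c) = qten (qten a b) c;
  qten_comm : forall a b, qten a b = qten b a;
  qten_k : forall a, qten qk a = a;
  qten_sup : forall (u : qcar) (I : Type) (f : I -> qcar),
      qten u (qsup I f) = qsup I (fun i => qten u (f i))
}.

Arguments qle {V} : rename.
Arguments qsup {V} : rename.
Arguments qten {V} : rename.
Arguments qk {V} : rename.

Definition qbot (V : quantale) : V := qsup False (fun e => match e with end).
Definition qtop (V : quantale) : V := qsup V (fun a => a).
Definition qmeet {V : quantale} (a b : V) : V :=
  qsup {c : V | qle c a /\ qle c b} (fun c => proj1_sig c).

Definition nontrivial (V : quantale) : Prop := qbot V <> qtop V.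

Definition vrel (V : quantale) (X Y : Type) := X -> Y -> V.

Definition vle {V : quantale} {X Y : Type} (r r' : vrel V X Y) : Prop :=
  forall x y, qle (r x y) (r' x y).

Definition vcomp {V : quantale} {X Y Z : Type}
  (s : vrel V Y Z) (r : vrel V X Y) : vrel V X Z :=
  fun x z => qsup Y (fun y => qten (r x y) (s y z)).

Definition vconv {V : quantale} {X Y : Type} (r : vrel V X Y) : vrel V Y X :=
  fun y x => r x y.

Definition vmeet {V : quantale} {X Y : Type} (r r' : vrel V X Y) : vrel V X Y :=
  fun x y => qmeet (r x y) (r' x y).

(** a function as V-relation: value k on its graph, bot elsewhere *)
Definition vgraph (V : quantale) {X Y : Type} (f : X -> Y) : vrel V X Y :=
  fun x y => qsup (f x = y) (fun _ => qk).

Record functor := Functor {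
  fobj :> Type -> Type;
  fmap : forall X Y : Type, (X -> Y) -> fobj X -> fobj Y;
  fmap_id : forall (X : Type) (t : fobj X), fmap X X (fun x => x) t = t;
  fmap_comp : forall (X Y Z : Type) (f : X -> Y) (g : Y -> Z) (t : fobj X),
      fmap X Z (fun x => g (f x)) t = fmap Y Z g (fmap X Y f t)
}.
Arguments fmap F {X Y} : rename.

Definition lax_extension (V : quantale) (F : functor)
  (Fh : forall X Y : Type, vrel V X Y -> vrel V (F X) (F Y)) : Prop :=
  (forall X Y (r r' : vrel V X Y), vle r r' -> vle (Fh X Y r) (Fh X Y r'))
  /\ (forall X Y Z (r : vrel V X Y) (s : vrel V Y Z),
        vle (vcomp (Fh Y Z s) (Fh X Y r)) (Fh X Z (vcomp s r)))
  /\ (forall X Y (f : X -> Y),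
        vle (vgraph V (fmap F f)) (Fh X Y (vgraph V f))
        /\ vle (vconv (vgraph V (fmap F f))) (Fh Y X (vconv (vgraph V f)))).

Definition symmetric {V : quantale} {X : Type} (s : vrel V X X) : Prop :=
  s = vconv s.

Definition simulation {V : quantale} {F : functor}
  (Fh : forall X Y : Type, vrel V X Y -> vrel V (F X) (F Y))
  {X : Type} (alpha : X -> F X) (s : vrel V X X) : Prop :=
  vle (vcomp (vgraph V alpha) s) (vcomp (Fh X X s) (vgraph V alpha)).

Definition Fsym {V : quantale} {F : functor}
  (Fh : forall X Y : Type, vrel V X Y -> vrel V (F X) (F Y))
  {X : Type} (s : vrel V X X) : vrel V (F X) (F X) :=
  vmeet (Fh X X s) (vconv (Fh X X s)).

(** Composing with the graph of a function on either side is pointwise: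
    [vgraph f . r <= t . vgraph g] holds iff [r x z <= t (g x) (f z)] for all
    [x, z].  So [s] being a simulation says [s x z <= Fh s (alpha x) (alpha z)],
    and symmetry gives [s x z = s z x <= Fh s (alpha z) (alpha x)]; hence
    [s x z] lies below the meet of the two, which is the pointwise form of the
    claim. *)


Lemma qten_k_r (V : quantale) (a : V) : qten a qk = a.
Proof. rewrite qten_comm. apply qten_k. Qed.

Lemma qmeet_greatest (V : quantale) (a b c : V) :
  qle c a -> qle c b -> qle c (qmeet a b).
Proof.
  intros Hca Hcb.
  exact (qsup_ub _ _ (fun c : {c : V | qle c a /\ qle c b} => proj1_sig c)
           (exist _ c (conj Hca Hcb))).
Qed.

Lemma qten_vgraph (V : quantale) (A B : Type) (f : A -> B) (a : V) x y :
  qten a (vgraph V f x y) = qsup (f x = y) (fun _ => a).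
Proof. unfold vgraph. rewrite qten_sup, qten_k_r. reflexivity. Qed.

Lemma vcomp_vgraph_r (V : quantale) (A D C : Type)
  (g : A -> D) (t : vrel V D C) x c :
  vcomp t (vgraph V g) x c = t (g x) c.
Proof.
  unfold vcomp. apply qle_antisym.
  - apply qsup_least; intro d.
    rewrite qten_comm, qten_vgraph.
    apply qsup_least; intros <-. apply qle_refl.
  - apply qle_trans with (qten (vgraph V g x (g x)) (t (g x) c)).
    + rewrite qten_comm, qten_vgraph. exact (qsup_ub _ _ _ eq_refl).
    + exact (qsup_ub _ _ (fun d => qten (vgraph V g x d) (t d c)) (g x)).
Qed.

Lemma vgraph_vcomp_leP (V : quantale) (A B C : Type)
  (f : B -> C) (r : vrel V A B) x c (b : V) :
  qle (vcomp (vgraph V f) r x c) b <-> (forall z, f z = c -> qle (r x z) b).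
Proof.
  unfold vcomp. split.
  - intros Hle z Hz.
    apply qle_trans with (qten (r x z) (vgraph V f z c)).
    + rewrite qten_vgraph. exact (qsup_ub _ _ _ Hz).
    + eapply qle_trans; [| exact Hle].
      exact (qsup_ub _ _ (fun y => qten (r x y) (vgraph V f y c)) z).
  - intros Hr. apply qsup_least; intro z.
    rewrite qten_vgraph. apply qsup_least. exact (Hr z).
Qed.

Lemma vgraph_vcomp_le_vcomp_vgraphP (V : quantale) (A B C D : Type)
  (f : B -> C) (r : vrel V A B) (g : A -> D) (t : vrel V D C) :
  vle (vcomp (vgraph V f) r) (vcomp t (vgraph V g))
  <-> (forall x z, qle (r x z) (t (g x) (f z))).
Proof.
  split.
  - intros Hle x z.
    specialize (Hle x (f z)). rewrite vcomp_vgraph_r in Hle.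
    exact (proj1 (vgraph_vcomp_leP _ _ _ _ _ _ _ _ _) Hle z eq_refl).
  - intros Hr x c. rewrite vcomp_vgraph_r.
    apply vgraph_vcomp_leP. intros z <-. apply Hr.
Qed.

Theorem proposition9 (V : quantale) (F : functor)
  (Fh : forall X Y : Type, vrel V X Y -> vrel V (F X) (F Y))
  (X : Type) (alpha : X -> F X) (s : vrel V X X) :
  nontrivial V ->
  lax_extension V F Fh ->
  symmetric s ->
  simulation Fh alpha s ->
  vle (vcomp (vgraph V alpha) s) (vcomp (Fsym Fh s) (vgraph V alpha)).
Proof.
  intros _ _ Hsym Hsim.
  pose proof (proj1 (vgraph_vcomp_le_vcomp_vgraphP _ _ _ _ _ alpha s alpha _) Hsim)
    as Hpt.
  apply vgraph_vcomp_le_vcomp_vgraphP; intros x z.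
  apply qmeet_greatest.
  - apply Hpt.
  - replace (s x z) with (s z x) by exact (f_equal (fun r => r z x) Hsym).
    apply Hpt.
Qed.
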